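(* Let $J$ be a set and $\mathcal{G}^{*J}=*_{\alpha\in J}\mathcal{G}(\alpha)$ the levelwise free product of copies of the simplicial group $\mathcal{G}$. Then for each $n\geq1$: (1) $N_n\mathcal{G}^{*J}=R[\{2,3,\dots,n+1\}]$; (2) $\mathcal{Z}_n\mathcal{G}^{*J}=R[\{1,2,\dots,n+1\}]$; (3) $\mathcal{B}_n\mathcal{G}^{*J}=\mathcal{Z}_n\mathcal{G}^{*J}=R[\{1,2,\dots,n+1\}]$.
   Context: For a simplicial group $G$: Moore chains $N_nG=\bigcap_{i=1}^n\mathrm{Ker}(d_i\colon G_n\to G_{n-1})$, Moore cycles $\mathcal{Z}_nG=\bigcap_{i=0}^n\mathrm{Ker}(d_i)$, Moore boundaries $\mathcal{B}_nG=d_0(N_{n+1}G)$. $\mathcal{G}$ is the simplicial group with $\mathcal{G}_n$ the free group on letters $x_{i,j}$, $1\leq i<j\leq n+1$, faces $d_t(x_{i,j})=x_{i-1,j-1}$ if $t+1<i$, $=1$ if $t+1\in\{i,j\}$, $=x_{i,j-1}$ if $i<t+1<j$, $=x_{i,j}$ if $t+1>j$, and degeneracies $s_t(x_{i,j})=x_{i+1,j+1}$ if $t+1<i$, $=x_{i,j+1}x_{i+1,j+1}$ if $t+1=i$, $=x_{i,j+1}$ if $i<t+1<j$, $=x_{i,j}x_{i,j+1}$ if $t+1=j$, $=x_{i,j}$ if $t+1>j$ ($0\leq t\leq n$). In $\mathcal{G}^{*J}_n$ write $x_{i,j}(\alpha)$ for the letter $x_{i,j}$ of the copy indexed by $\alpha\in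 J$, and let $R_{i,j}$ be the normal closure of $\{x_{i,j}(\alpha)\mid\alpha\in J\}$ in $\mathcal{G}^{*J}_n$. For $T\subseteq\{1,\dots,n+1\}$, $R[T]$ is the product of all iterated commutator subgroups $[[\dots[R_{i_1,j_1},R_{i_2,j_2}],\dots],R_{i_t,j_t}]$, $t\geq1$, over sequences of pairs $1\leq i_s<j_s\leq n+1$ with $T\subseteq\{i_1,j_1,\dots,i_t,j_t\}$ (for $t=1$ the subgroup is $R_{i_1,j_1}$). *)

(* Free groups are encoded as words modulo free
   equivalence. *)
From mathcomp Require Import all_boot.
Set Implicit Arguments. Unset Strict Implicit. Unset Printing Implicit Defensive.

Section FreeSimplicial.
Variable J : Type.

(* letter x_{i,j}(alpha) *)
Definition letter := (nat * nat * J)%type.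
(* a word: sequence of (exponent sign, letter); true = +1, false = -1 *)
Definition word := seq (bool * letter).

Definition winv (w : word) : word := rev (map (fun p => (~~ p.1, p.2)) w).

Inductive freq : word -> word -> Prop :=
| freq_refl w : freq w w
| freq_sym u v : freq u v -> freq v u
| freq_trans u v w : freq u v -> freq v w -> freq u w
| freq_cancel u v b x : freq (u ++ (b, x) :: (~~ b, x) :: v) (u ++ v).

(* letters of G^{*J}_n : 1 <= i < j <= n+1 *)
Definition valid_pair (n : nat) (q : nat * nat) : bool :=
  (1 <= q.1) && (q.1 < q.2) && (q.2 <= n.+1).
Definition wf_letter (n : nat) (x : letter) : bool := valid_pair n (x.1.1, x.1.2).
Definition level (n : nat) (w : word) : bool := all (fun p => wf_letter n p.2) w.

(* face map d_t on a letter (None means the identity element) *)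
Definition face_letter (t : nat) (x : letter) : option letter :=
  let: (i, j, a) := x in
  if t.+1 < i then Some (i.-1, j.-1, a)
  else if (t.+1 == i) || (t.+1 == j) then None
  else if t.+1 < j then Some (i, j.-1, a)
  else Some (i, j, a).

Definition face (t : nat) (w : word) : word :=
  pmap (fun p => omap (fun y => (p.1, y)) (face_letter t p.2)) w.

Inductive gen (S : word -> Prop) : word -> Prop :=
| gen_nil : gen S [::]
| gen_in w : S w -> gen S w
| gen_mul u v : gen S u -> gen S v -> gen S (u ++ v)
| gen_inv u : gen S u -> gen S (winv u)
| gen_eq u v : gen S u -> freq u v -> gen S v.

(* R_{i,j}: normal closure in G^{*J}_n of {x_{i,j}(alpha) | alpha in J} *)
Definition Rgen (n i j : nat) : word -> Prop :=
  gen (fun w => exists (g : word) (a : J),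
         level n g /\ w = winv g ++ (true, (i, j, a)) :: g).

Definition comm (H K : word -> Prop) : word -> Prop :=
  gen (fun w => exists h k, H h /\ K k /\ w = winv h ++ winv k ++ h ++ k).

Definition iterC (n : nat) (p : nat * nat) (s : seq (nat * nat)) : word -> Prop :=
  foldl (fun H q => comm H (Rgen n q.1 q.2)) (Rgen n p.1 p.2) s.

Definition RT (n : nat) (T : seq nat) : word -> Prop :=
  gen (fun w => exists (p : nat * nat) (s : seq (nat * nat)),
         all (valid_pair n) (p :: s) /\
         {subset T <= flatten [seq [:: q.1; q.2] | q <- p :: s]} /\
         iterC n p s w).

Definition MooreN (n : nat) (w : word) : Prop :=
  level n w /\ forall i, 1 <= i <= n -> freq (face i w) [::].
Definition MooreZ (n : nat) (w : word) : Prop :=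
  level n w /\ forall i, i <= n -> freq (face i w) [::].
Definition MooreB (n : nat) (w : word) : Prop :=
  level n w /\ exists u, MooreN n.+1 u /\ freq (face 0 u) w.

End FreeSimplicial.

(* The face d_t agrees, up to an injective relabelling of letters, with the
   retraction [kill t.+1] deleting every letter x_{i,j}(a) with t+1 in {i,j}.
   Moore chains and cycles are therefore the words killed by the retractions
   [kill k] for k in {2..n+1}, resp. {1..n+1}, and boundaries coincide with
   cycles because the shift x_{i,j} |-> x_{i+1,j+1} is a section of d_0
   commuting with the other faces.
   That words of R[T] are killed by [kill k] for k in T is clear. Conversely,
   if c in R[T] is killed by [kill m], then c = c * (kill m c)^-1, and this
   element lies in R[m :: T]: for a generator of R[T] this follows by
   induction on the length of the iterated commutator from
     [a,b] [A,B]^-1 = [a A^-1, b]^A * ([A, b B^-1]^B)^([A,B]^-1)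
   (with A = kill m a, B = kill m b) and, when b B^-1 involves a commutator
   [R_e', R_e] with e' touching m, from the Hall-Witt identity. *)

From mathcomp Require Import all_boot zify.
From Stdlib Require Import Setoid Morphisms.
Set Implicit Arguments. Unset Strict Implicit. Unset Printing Implicit Defensive.

#[global] Hint Resolve freq_refl : core.

Section FreeGroup.
Variable J : Type.
Local Notation word := (word J).

#[global] Instance freq_equiv : Equivalence (@freq J).
Proof. split; [exact: freq_refl | exact: freq_sym | exact: freq_trans]. Qed.

Lemma freq_ctx (u v a b : word) : freq u v -> freq (a ++ u ++ b) (a ++ v ++ b).
Proof.
elim=> {u v} [w|u v _ IH|u v w _ IH1 _ IH2|u v c x].
- reflexivity.
- by symmetry.
- by rewrite IH1.
- by have := freq_cancel (a ++ u) (v ++ b) c x; rewrite -!catA.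
Qed.

#[global] Instance cat_freq : Proper (@freq J ==> @freq J ==> @freq J) cat.
Proof.
move=> u u' Hu v v' Hv; transitivity (u' ++ v).
  exact: (freq_ctx [::] v Hu).
by have := freq_ctx u' [::] Hv; rewrite !cats0.
Qed.

#[global] Instance cons_freq p : Proper (@freq J ==> @freq J) (cons p).
Proof. by move=> u v H; have := freq_ctx [:: p] [::] H; rewrite !cats0. Qed.

Lemma winv_cat (u v : word) : winv (u ++ v) = winv v ++ winv u.
Proof. by rewrite /winv map_cat rev_cat. Qed.

Lemma winv_cons b x (u : word) : winv ((b, x) :: u) = winv u ++ [:: (~~ b, x)].
Proof. by rewrite /winv /= rev_cons cats1. Qed.

Lemma winvK : involutive (@winv J).
Proof.
move=> u; rewrite /winv map_rev revK -map_comp -[RHS]map_id.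
by apply: eq_map => -[b x] /=; rewrite negbK.
Qed.

#[global] Instance winv_freq : Proper (@freq J ==> @freq J) (@winv J).
Proof.
move=> u v; elim=> {u v} [w|u v _ IH|u v w _ IH1 _ IH2|u v c x].
- reflexivity.
- by symmetry.
- by rewrite IH1.
- rewrite !winv_cat !winv_cons negbK -!catA /=.
  exact: (freq_cancel _ (winv u) c x).
Qed.

Lemma mulwV (u : word) : freq (u ++ winv u) [::].
Proof.
elim: u => [|[b x] u IH]; first reflexivity.
by rewrite winv_cons /= catA IH; apply: (freq_cancel [::] [::] b x).
Qed.

Lemma mulVw (u : word) : freq (winv u ++ u) [::].
Proof. by have := mulwV (winv u); rewrite winvK. Qed.

(* Reflexive decision procedure for identities in the free group generated
   by finitely many words: an expression is flattened to a sequence of signed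
   atoms, which is then freely reduced. *)
Inductive fexpr := FVar of nat | FInv of fexpr | FMul of fexpr & fexpr | FOne.

Fixpoint feval (env : seq word) (e : fexpr) : word :=
  match e with
  | FVar i => nth [::] env i
  | FInv e => winv (feval env e)
  | FMul e1 e2 => feval env e1 ++ feval env e2
  | FOne => [::]
  end.

Definition finv_atoms (s : seq (bool * nat)) := rev (map (fun p => (~~ p.1, p.2)) s).

Fixpoint fatoms (e : fexpr) : seq (bool * nat) :=
  match e with
  | FVar i => [:: (true, i)]
  | FInv e => finv_atoms (fatoms e)
  | FMul e1 e2 => fatoms e1 ++ fatoms e2
  | FOne => [::]
  end.

Definition eval_atom (env : seq word) (p : bool * nat) : word :=
  if p.1 then nth [::] env p.2 else winv (nth [::] env p.2).

Definition eval_atoms env (s : seq (bool * nat)) : word :=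
  flatten (map (eval_atom env) s).

Definition reduce_step (p : bool * nat) (acc : seq (bool * nat)) :=
  if acc is q :: acc' then
    if (q.2 == p.2) && (q.1 == ~~ p.1) then acc' else p :: acc
  else [:: p].

Definition reduce (s : seq (bool * nat)) := foldr reduce_step [::] s.

Lemma eval_atoms_cat env s t :
  eval_atoms env (s ++ t) = eval_atoms env s ++ eval_atoms env t.
Proof. by rewrite /eval_atoms map_cat flatten_cat. Qed.

Lemma eval_atoms_inv env s : eval_atoms env (finv_atoms s) = winv (eval_atoms env s).
Proof.
elim: s => [//|[b i] s IH].
rewrite /finv_atoms /= rev_cons -cats1 eval_atoms_cat IH.
rewrite [eval_atoms env (_ :: s)]/eval_atoms /= winv_cat /eval_atoms /= cats0.
by rewrite /eval_atom /=; case: b; rewrite ?winvK.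
Qed.

Lemma feval_atoms env e : feval env e = eval_atoms env (fatoms e).
Proof.
elim: e => [i|e IH|e1 IH1 e2 IH2|] //=.
- by rewrite /eval_atoms /= cats0.
- by rewrite IH eval_atoms_inv.
- by rewrite eval_atoms_cat IH1 IH2.
Qed.

Lemma eval_atoms_reduce env s : freq (eval_atoms env s) (eval_atoms env (reduce s)).
Proof.
elim: s => [|p s IH] /=; first reflexivity.
rewrite [eval_atoms env (p :: s)]/eval_atoms /= -/(eval_atoms env s) IH.
case: (reduce s) => [|q t] /=; first by rewrite /eval_atoms.
case: ifP => [/andP [/eqP e2 /eqP e1]|_]; last by rewrite /eval_atoms.
rewrite /eval_atoms /= catA.
move: e1 e2; case: p => [b i]; case: q => [c k] /= -> ->.
by rewrite /eval_atom /=; case: b => /=; rewrite ?mulwV ?mulVw.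
Qed.

Lemma feval_freq env e1 e2 :
  reduce (fatoms e1) = reduce (fatoms e2) -> freq (feval env e1) (feval env e2).
Proof.
by move=> H; rewrite !feval_atoms (eval_atoms_reduce env (fatoms e1)) H -eval_atoms_reduce.
Qed.

End FreeGroup.

Ltac fg_lookup x env :=
  match env with
  | x :: _ => constr:(0)
  | _ :: ?e => let k := fg_lookup x e in constr:(S k)
  end.

Ltac fg_reify env t :=
  match t with
  | cat ?a ?b =>
      let ea := fg_reify env a in let eb := fg_reify env b in constr:(FMul ea eb)
  | winv ?a => let ea := fg_reify env a in constr:(FInv ea)
  | [::] => constr:(FOne)
  | _ => let k := fg_lookup t env in constr:(FVar k)
  end.

(* [free_group [:: x1; ...; xk]] proves [freq L R] when L and R are products
   of the words xi and their inverses that are equal in the free group on the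
   xi. *)
Ltac free_group env :=
  match goal with
  | |- freq ?L ?R =>
    let eL := fg_reify env L in let eR := fg_reify env R in
    change (freq (feval env eL) (feval env eR));
    apply: feval_freq; vm_compute; reflexivity
  end.

Section LetterMaps.
Variable J : Type.
Local Notation word := (word J).
Local Notation letter := (letter J).

Definition wmap (f : letter -> option letter) (w : word) : word :=
  pmap (fun p => omap (fun y => (p.1, y)) (f p.2)) w.

Lemma wmap_cat f (u v : word) : wmap f (u ++ v) = wmap f u ++ wmap f v.
Proof. exact: pmap_cat. Qed.

Lemma wmap_cons f b x (u : word) :
  wmap f ((b, x) :: u) = if f x is Some y then (b, y) :: wmap f u else wmap f u.
Proof. by rewrite /wmap /=; case: (f x). Qed.

Lemma wmap_winv f (u : word) : wmap f (winv u) = winv (wmap f u).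
Proof.
elim: u => [//|[b x] u IH].
rewrite winv_cons wmap_cat IH !wmap_cons.
by case: (f x) => [y|]; rewrite ?winv_cons ?cats0.
Qed.

#[global] Instance wmap_freq f : Proper (@freq J ==> @freq J) (wmap f).
Proof.
move=> u v; elim=> {u v} [w|u v _ IH|u v w _ IH1 _ IH2|u v c x].
- reflexivity.
- by symmetry.
- by rewrite IH1.
- rewrite !wmap_cat !wmap_cons; case: (f x) => [y|]; last reflexivity.
  exact: freq_cancel.
Qed.

Lemma wmap_comp f g (w : word) : wmap f (wmap g w) = wmap (fun x => obind f (g x)) w.
Proof.
elim: w => [//|[b x] w IH]; rewrite !wmap_cons; case: (g x) => [y|]; last by rewrite IH.
by rewrite wmap_cons IH /=; case: (f y).
Qed.

Lemma wmap_Some (w : word) : wmap Some w = w.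
Proof. by elim: w => [//|[b x] w IH]; rewrite wmap_cons IH. Qed.

Lemma eq_in_wmap (P : pred letter) f g (w : word) :
  {in P, f =1 g} -> all (fun p => P p.2) w -> wmap f w = wmap g w.
Proof.
move=> fg; elim: w => [//|[b x] w IH] /andP [Px Pw].
by rewrite !wmap_cons fg // IH.
Qed.

Lemma all_wmap (P Q : pred letter) f (u : word) :
  (forall x y, P x -> f x = Some y -> Q y) ->
  all (fun p => P p.2) u -> all (fun p => Q p.2) (wmap f u).
Proof.
move=> PQ; elim: u => [//|[b x] u IH] /andP [Px Pu].
rewrite wmap_cons; case E: (f x) => [y|]; last exact: IH.
by rewrite /= (PQ _ _ Px E) IH.
Qed.

Lemma level_cat n (u v : word) : level n (u ++ v) = level n u && level n v.
Proof. exact: all_cat. Qed.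

Lemma level_winv n (u : word) : level n (winv u) = level n u.
Proof. by rewrite /level /winv all_rev all_map. Qed.

End LetterMaps.

Section FacesAsRetractions.
Variable J : Type.
Local Notation word := (word J).
Local Notation letter := (letter J).

Definition touches (m : nat) (q : nat * nat) := (q.1 == m) || (q.2 == m).

Definition kill_letter (m : nat) (x : letter) : option letter :=
  if touches m (x.1.1, x.1.2) then None else Some x.

Definition kill m (w : word) := wmap (kill_letter m) w.

Definition shift_letter (x : letter) : letter := (x.1.1.+1, x.1.2.+1, x.2).

Definition shift (w : word) := wmap (fun x => Some (shift_letter x)) w.

Definition bump t v := if t.+1 <= v then v.+1 else v.

Definition unface_letter t (x : letter) : option letter :=
  Some (bump t x.1.1, bump t x.1.2, x.2).

Ltac case_letter := repeat (case: ifP => /= ?); try (exfalso; lia); try reflexivity;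
  try (congr (Some (_, _, _)); lia).

Lemma face_kill_letter t (x : letter) : x.1.1 < x.1.2 ->
  obind (face_letter t) (kill_letter t.+1 x) = face_letter t x.
Proof. by case: x => [[i j] a] /= ?; rewrite /kill_letter /touches /face_letter; case_letter. Qed.

Lemma unface_face_letter t (x : letter) : x.1.1 < x.1.2 ->
  obind (unface_letter t) (face_letter t x) = kill_letter t.+1 x.
Proof.
by case: x => [[i j] a] /= ?; rewrite /kill_letter /touches /face_letter /unface_letter /bump;
  case_letter.
Qed.

Lemma face0_shift_letter (x : letter) : 0 < x.1.1 -> face_letter 0 (shift_letter x) = Some x.
Proof. by case: x => [[i j] a] /= ?; rewrite /face_letter /shift_letter; case_letter. Qed.

Lemma faceS_shift_letter t (x : letter) : x.1.1 < x.1.2 ->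
  face_letter t.+1 (shift_letter x) = omap shift_letter (face_letter t x).
Proof. by case: x => [[i j] a] /= ?; rewrite /face_letter /shift_letter; case_letter. Qed.

Lemma face_face0_letter t (x : letter) : 0 < x.1.1 < x.1.2 ->
  obind (face_letter t) (face_letter 0 x) = obind (face_letter 0) (face_letter t.+1 x).
Proof. by case: x => [[i j] a] /= /andP [? ?]; rewrite /face_letter; case_letter. Qed.

Lemma wf_letterP n (x : letter) : wf_letter n x -> 0 < x.1.1 < x.1.2.
Proof. by case: x => [[i j] a]; rewrite /wf_letter /valid_pair /=; lia. Qed.

Lemma wf_shift_letter n (x : letter) : wf_letter n x -> wf_letter n.+1 (shift_letter x).
Proof. by case: x => [[i j] a]; rewrite /wf_letter /valid_pair /shift_letter /=; lia. Qed.

Variable n : nat.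

Lemma level_kill m (w : word) : level n w -> level n (kill m w).
Proof. by apply: all_wmap => x y Hx; rewrite /kill_letter; case: ifP => // _ [<-]. Qed.

Lemma level_shift (w : word) : level n w -> level n.+1 (shift w).
Proof. by apply: all_wmap => x y Hx [<-]; apply: wf_shift_letter. Qed.

Lemma face_kill t (w : word) : level n w -> face t (kill t.+1 w) = face t w.
Proof.
move=> Hw; rewrite /face -/(wmap _ _) /kill wmap_comp.
by apply: (eq_in_wmap (P := wf_letter n)) Hw => x /wf_letterP /andP [_ ?]; apply: face_kill_letter.
Qed.

Lemma unface_face t (w : word) : level n w -> wmap (unface_letter t) (face t w) = kill t.+1 w.
Proof.
move=> Hw; rewrite /face -/(wmap _ _) wmap_comp.
apply: (eq_in_wmap (P := wf_letter n)) Hw => x /wf_letterP /andP [_ ?].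
exact: unface_face_letter.
Qed.

Lemma face0_shift (w : word) : level n w -> face 0 (shift w) = w.
Proof.
move=> Hw; rewrite /face -/(wmap _ _) /shift wmap_comp -[RHS]wmap_Some.
apply: (eq_in_wmap (P := wf_letter n)) Hw => x /wf_letterP /andP [? _].
exact: face0_shift_letter.
Qed.

Lemma faceS_shift t (w : word) : level n w -> face t.+1 (shift w) = shift (face t w).
Proof.
move=> Hw; rewrite /face -!/(wmap _ _) /shift !wmap_comp.
apply: (eq_in_wmap (P := wf_letter n)) Hw => x /wf_letterP /andP [_ ?].
transitivity (omap shift_letter (face_letter t x)); first exact: faceS_shift_letter.
by case: (face_letter t x).
Qed.

Lemma face_face0 t (w : word) : level n w -> face t (face 0 w) = face 0 (face t.+1 w).
Proof.
move=> Hw; rewrite /face -!/(wmap _ _) !wmap_comp.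
by apply: (eq_in_wmap (P := wf_letter n)) Hw => x /wf_letterP; apply: face_face0_letter.
Qed.

(* [unface_letter t] is injective, so [face t w] is trivial iff [kill t.+1 w] is. *)
Lemma face_eq1_kill t (w : word) : level n w ->
  freq (face t w) [::] <-> freq (kill t.+1 w) [::].
Proof.
move=> Hw; split=> H.
- by rewrite -(unface_face t Hw) H.
- by rewrite -(face_kill t Hw) H.
Qed.

Lemma faces_eq1_kill (P : pred nat) (T : seq nat) (w : word) : level n w ->
  (forall k, (k \in T) = (0 < k) && P k.-1) ->
  (forall i, P i -> freq (face i w) [::]) <-> (forall k, k \in T -> freq (kill k w) [::]).
Proof.
move=> Hw HT; split=> H.
- move=> k; rewrite HT => /andP [k_gt0 Pk].
  by rewrite -(prednK k_gt0) -face_eq1_kill //; apply: H.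
- by move=> i Pi; rewrite face_eq1_kill //; apply: H; rewrite HT.
Qed.

Lemma MooreN_kill (w : word) : level n w ->
  MooreN n w <-> (forall k, k \in iota 2 n -> freq (kill k w) [::]).
Proof.
move=> Hw; rewrite -(faces_eq1_kill (P := fun i => 0 < i <= n)) //; last first.
  by move=> k; rewrite mem_iota; lia.
by split=> [[]|] //; split.
Qed.

Lemma MooreZ_kill (w : word) : level n w ->
  MooreZ n w <-> (forall k, k \in iota 1 n.+1 -> freq (kill k w) [::]).
Proof.
move=> Hw; rewrite -(faces_eq1_kill (P := fun i => i <= n)) //; last first.
  by move=> k; rewrite mem_iota; lia.
by split=> [[]|] //; split.
Qed.

End FacesAsRetractions.

Lemma MooreB_Z (J : Type) (n : nat) (w : word J) : level n w -> MooreB n w <-> MooreZ n w.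
Proof.
move=> Hw; split.
- case=> _ [u [[Hu Hn] Hf]]; split=> // i Hi.
  by rewrite -Hf (face_face0 _ Hu) (Hn i.+1).
- case=> _ Hz; split=> //; exists (shift w); rewrite (face0_shift Hw).
  split=> //; split=> [|i /andP [i_gt0 i_le]]; first exact: level_shift.
  by rewrite -(prednK i_gt0) (faceS_shift _ Hw) (Hz i.-1) //; lia.
Qed.


Section Subgroups.
Variable J : Type.
Local Notation word := (word J).
Variable n : nat.

Definition commw (a b : word) := winv a ++ winv b ++ a ++ b.
Definition conjw (u g : word) := winv g ++ u ++ g.

(* Elements of G^{*J}_n are represented by all words equivalent to a word of
   level n. *)
Definition levelq (g : word) := exists2 g', level n g' & freq g g'.

Record subgroup (P : word -> Prop) : Prop := {
  group1 : P [::];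
  groupM : forall u v, P u -> P v -> P (u ++ v);
  groupV : forall u, P u -> P (winv u);
  group_freq : forall u v, freq u v -> P u -> P v }.

Record normal (P : word -> Prop) : Prop := {
  normal_subgroup :> subgroup P;
  normalJ : forall u g, P u -> level n g -> P (conjw u g) }.

Lemma levelq_level g : level n g -> levelq g.
Proof. by exists g. Qed.

Lemma levelqM u v : levelq u -> levelq v -> levelq (u ++ v).
Proof. by move=> [u' Hu Eu] [v' Hv Ev]; exists (u' ++ v'); rewrite ?level_cat ?Hu ?Eu ?Ev. Qed.

Lemma levelqV u : levelq u -> levelq (winv u).
Proof. by move=> [u' Hu Eu]; exists (winv u'); rewrite ?level_winv ?Eu. Qed.

Lemma levelq_freq u v : freq u v -> levelq u -> levelq v.
Proof. by move=> uv [u' Hu Eu]; exists u'; rewrite -?uv. Qed.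

Lemma levelq_kill m u : levelq u -> levelq (kill m u).
Proof. by move=> [u' Hu Eu]; exists (kill m u'); rewrite ?level_kill ?Eu. Qed.

Lemma levelq_comm a b : levelq a -> levelq b -> levelq (commw a b).
Proof. by move=> la lb; rewrite /commw; repeat apply: levelqM; try apply: levelqV. Qed.

Lemma normalJq P u g : normal P -> P u -> levelq g -> P (conjw u g).
Proof.
move=> HP Pu [g' Hg' Eg]; apply: (group_freq HP _ (normalJ HP Pu Hg')).
by rewrite /conjw Eg.
Qed.

Lemma gen_min (S P : word -> Prop) w : subgroup P -> (forall s, S s -> P s) -> gen S w -> P w.
Proof.
move=> HP SP; elim=> {w} [|w|u v _ Pu _ Pv|u _ Pu|u v _ Pu uv].
- exact: group1.
- exact: SP.
- exact: groupM.
- exact: groupV.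
- exact: (group_freq HP uv Pu).
Qed.

Lemma gen_levelq (S : word -> Prop) w : (forall s, S s -> levelq s) -> gen S w -> levelq w.
Proof.
move=> HS; elim=> {w} [|w|u v _ Hu _ Hv|u _ Hu|u v _ Hu uv].
- exact: levelq_level.
- exact: HS.
- exact: levelqM.
- exact: levelqV.
- exact: levelq_freq uv Hu.
Qed.

Lemma gen_subgroup (S : word -> Prop) : subgroup (gen S).
Proof.
by split; [apply: gen_nil | apply: gen_mul | apply: gen_inv | move=> u v /[swap]; apply: gen_eq].
Qed.

Lemma gen_normal (S : word -> Prop) :
  (forall s g, S s -> level n g -> gen S (conjw s g)) -> normal (gen S).
Proof.
move=> SJ; split; first exact: gen_subgroup.
move=> u g Hu Hg; elim: Hu => {u} [|w Sw|u v _ Hu _ Hv|u _ Hu|u v _ Hu uv].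
- by apply: (gen_eq (gen_nil S)); rewrite /conjw mulVw.
- exact: SJ.
- by apply: (gen_eq (gen_mul Hu Hv)); rewrite /conjw; free_group [:: u; v; g].
- by apply: (gen_eq (gen_inv Hu)); rewrite /conjw; free_group [:: u; g].
- by apply: (gen_eq Hu); rewrite /conjw uv.
Qed.

Lemma gen_comm_l (P S Z : word -> Prop) h z : normal P -> (forall s, S s -> levelq s) ->
  (forall s z, S s -> Z z -> P (commw s z)) -> gen S h -> Z z -> P (commw h z).
Proof.
move=> HP Sq SZ Hh Hz; elim: Hh => {h} [|w Sw|u v Gu Hu Gv Hv|u Gu Hu|u v _ Hu uv].
- by apply: (group_freq HP _ (group1 HP)); rewrite /commw /= mulVw.
- exact: SZ.
- apply: (group_freq HP _ (groupM HP (normalJq HP Hu (gen_levelq Sq Gv)) Hv)).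
  by rewrite /commw /conjw; free_group [:: u; v; z].
- apply: (group_freq HP _ (normalJq HP (groupV HP Hu) (levelqV (gen_levelq Sq Gu)))).
  by rewrite /commw /conjw; free_group [:: u; z].
- by apply: (group_freq HP _ Hu); rewrite /commw uv.
Qed.

Lemma kill_cat m (u v : word) : kill m (u ++ v) = kill m u ++ kill m v.
Proof. exact: wmap_cat. Qed.

Lemma kill_winv m (u : word) : kill m (winv u) = winv (kill m u).
Proof. exact: wmap_winv. Qed.

Lemma kill_commw m (a b : word) : kill m (commw a b) = commw (kill m a) (kill m b).
Proof. by rewrite /commw !kill_cat !kill_winv. Qed.

Lemma kill_gen (P S : word -> Prop) m w : subgroup P -> (forall s, S s -> P (kill m s)) ->
  gen S w -> P (kill m w).
Proof.
move=> HP SP; elim=> {w} [|w|u v _ Hu _ Hv|u _ Hu|u v _ Hu uv].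
- exact: group1.
- exact: SP.
- by rewrite kill_cat; apply: groupM.
- by rewrite kill_winv; apply: groupV.
- by apply: (group_freq HP _ Hu); rewrite uv.
Qed.

(* The map g |-> g * (kill m g)^-1 is a crossed homomorphism, so it maps
   gen S into a normal subgroup as soon as it maps S into it. *)
Lemma gen_mul_killV (P S : word -> Prop) m g : normal P -> (forall s, S s -> levelq s) ->
  (forall s, S s -> P (s ++ winv (kill m s))) -> gen S g -> P (g ++ winv (kill m g)).
Proof.
move=> HP Sq SP; elim=> {g} [|w Sw|u v Gu Hu Gv Hv|u Gu Hu|u v _ Hu uv].
- exact: (group1 HP).
- exact: SP.
- have Ku := levelq_kill m (gen_levelq Sq Gu).
  apply: (group_freq HP _ (groupM HP Hu (normalJq HP Hv (levelqV Ku)))).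
  rewrite kill_cat /conjw winvK; set a := kill m u; set b := kill m v.
  free_group [:: u; v; a; b].
- have Ku := levelq_kill m (gen_levelq Sq Gu).
  apply: (group_freq HP _ (normalJq HP (groupV HP Hu) Ku)).
  rewrite kill_winv /conjw winvK; set a := kill m u; free_group [:: u; a].
- by apply: (group_freq HP _ Hu); rewrite uv.
Qed.

End Subgroups.

Section IteratedCommutators.
Variable J : Type.
Local Notation word := (word J).
Variable n : nat.
Local Notation normal := (@normal J n).
Local Notation levelq := (@levelq J n).
Local Notation RT := (@RT J n).
Local Notation iterC := (@iterC J n).
Local Notation Rgen := (@Rgen J n).

Lemma Rgen_normal i j : normal (Rgen i j).
Proof.
apply: gen_normal => _ g [g' [a [Hg' ->]]] Hg.
apply: gen_in; exists (g' ++ g), a; rewrite level_cat Hg' Hg.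
by rewrite /conjw winv_cat -!catA.
Qed.

Lemma Rgen_levelq e w : valid_pair n e -> Rgen e.1 e.2 w -> levelq w.
Proof.
move=> He; apply: gen_levelq => _ [g [a [Hg ->]]]; apply: levelq_level.
by rewrite level_cat level_winv Hg /= Hg andbT.
Qed.

Lemma comm_normal (H K : word -> Prop) : normal H -> normal K -> normal (comm H K).
Proof.
move=> HH HK; apply: gen_normal => _ g [h [k [Hh [Hk ->]]]] Hg.
apply: (gen_eq (u := commw (conjw h g) (conjw k g))).
  apply: gen_in; exists (conjw h g), (conjw k g).
  by split; [exact: (normalJ HH Hh Hg) | split; first exact: (normalJ HK Hk Hg)].
by rewrite /commw /conjw; free_group [:: h; k; g].
Qed.

Lemma comm_levelq (H K : word -> Prop) w : (forall h, H h -> levelq h) ->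
  (forall k, K k -> levelq k) -> comm H K w -> levelq w.
Proof. by move=> Hq Kq; apply: gen_levelq => _ [h [k [Hh [Hk ->]]]]; apply: levelq_comm; auto. Qed.

Lemma comm_comm_l (P H K : word -> Prop) g z : normal P ->
  (forall h, H h -> levelq h) -> (forall k, K k -> levelq k) ->
  (forall h k, H h -> K k -> P (commw (commw h k) z)) -> comm H K g -> P (commw g z).
Proof.
move=> HP Hq Kq HK Hg; apply: (gen_comm_l (Z := eq z) HP) Hg (erefl z).
- by move=> _ [h [k [Hh [Hk ->]]]]; apply: levelq_comm; auto.
- by move=> _ _ [h [k [Hh [Hk ->]]]] <-; apply: HK.
Qed.

Lemma iterC_rcons p s e : iterC p (rcons s e) = comm (iterC p s) (Rgen e.1 e.2).
Proof. by rewrite /iterC foldl_rcons. Qed.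

Lemma iterC_normal p s : normal (iterC p s).
Proof.
elim/last_ind: s => [|s e IH]; first exact: Rgen_normal.
by rewrite iterC_rcons; apply: comm_normal => //; apply: Rgen_normal.
Qed.

Lemma valid_rcons p s e :
  all (valid_pair n) (p :: rcons s e) = all (valid_pair n) (p :: s) && valid_pair n e.
Proof. by rewrite -rcons_cons all_rcons andbC. Qed.

Lemma iterC_levelq p s w : all (valid_pair n) (p :: s) -> iterC p s w -> levelq w.
Proof.
elim/last_ind: s w => [|s e IH] w; first by rewrite /= andbT; apply: Rgen_levelq.
rewrite valid_rcons iterC_rcons => /andP [Hv He].
by apply: comm_levelq => [h|k]; [apply: IH | apply: Rgen_levelq].
Qed.

Lemma iterC_comm p s e (h k : word) : iterC p s h -> Rgen e.1 e.2 k ->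
  iterC p (rcons s e) (commw h k).
Proof. by move=> Hh Hk; rewrite iterC_rcons; apply: gen_in; exists h, k. Qed.

Definition endpoints (E : seq (nat * nat)) := flatten [seq [:: q.1; q.2] | q <- E].

Lemma endpoints_rcons p s e :
  endpoints (p :: rcons s e) = endpoints (p :: s) ++ [:: e.1; e.2].
Proof. by rewrite /endpoints -rcons_cons map_rcons -cats1 flatten_cat. Qed.

Lemma mem_endpoints_rcons k p s e : (k \in endpoints (p :: rcons s e)) =
  (k \in endpoints (p :: s)) || (k \in [:: e.1; e.2]).
Proof. by rewrite endpoints_rcons mem_cat. Qed.

Lemma touches_mem k e : touches k e -> k \in [:: e.1; e.2].
Proof. by rewrite /touches !inE => /orP [] /eqP ->; rewrite eqxx ?orbT. Qed.

Definition RTgen (T : seq nat) (w : word) := exists p s,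
  all (valid_pair n) (p :: s) /\ {subset T <= endpoints (p :: s)} /\ iterC p s w.

Lemma RT_gen T p s w : all (valid_pair n) (p :: s) -> {subset T <= endpoints (p :: s)} ->
  iterC p s w -> RT T w.
Proof. by move=> Hv HT Hw; apply: gen_in; exists p, s. Qed.

Lemma RT_normal T : normal (RT T).
Proof.
apply: gen_normal => w g [p [s [Hv [HT Hw]]]] Hg.
by apply: (RT_gen Hv HT); exact: (normalJ (iterC_normal p s) Hw Hg).
Qed.

Lemma RTgen_levelq T w : RTgen T w -> levelq w.
Proof. by move=> [p [s [Hv [_ Hw]]]]; apply: iterC_levelq Hw. Qed.

Lemma RT_sub T T' w : {subset T <= T'} -> RT T' w -> RT T w.
Proof.
move=> TT'; apply: gen_min; first exact: RT_normal.
by move=> u [p [s [Hv [HT' Hw]]]]; apply: (RT_gen Hv) Hw => x /TT' /HT'.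
Qed.

End IteratedCommutators.

Arguments Rgen_normal {J n} i j.
Arguments iterC_normal {J n} p s.
Arguments RT_normal {J n} T.

Section RetractionKernels.
Variable J : Type.
Local Notation word := (word J).
Variable n : nat.
Local Notation normal := (@normal J n).
Local Notation levelq := (@levelq J n).
Local Notation RT := (@RT J n).
Local Notation iterC := (@iterC J n).
Local Notation Rgen := (@Rgen J n).

Definition ker_kill k (w : word) := freq (kill k w) [::].

Lemma ker_kill_normal k : normal (ker_kill k).
Proof.
split; first split; rewrite /ker_kill //.
- by move=> u v Hu Hv; rewrite kill_cat Hu Hv.
- by move=> u Hu; rewrite kill_winv Hu.
- by move=> u v <-.
- by move=> u g Hu _; rewrite /conjw !kill_cat kill_winv Hu mulVw.
Qed.

Lemma kill_touching m b i j a (g : word) : touches m (i, j) ->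
  kill m ((b, (i, j, a)) :: g) = kill m g.
Proof. by move=> Ht; rewrite /kill wmap_cons /kill_letter /= Ht. Qed.

Lemma kill_untouching m b i j a (g : word) : ~~ touches m (i, j) ->
  kill m ((b, (i, j, a)) :: g) = (b, (i, j, a)) :: kill m g.
Proof. by move=> Ht; rewrite /kill wmap_cons /kill_letter /= (negbTE Ht). Qed.

Lemma Rgen_ker_kill k e w : touches k e -> Rgen e.1 e.2 w -> ker_kill k w.
Proof.
move=> Ht; apply: gen_min; first exact: ker_kill_normal.
move=> _ [g [a [_ ->]]]; rewrite /ker_kill kill_cat kill_winv.
by rewrite kill_touching // mulVw.
Qed.

Lemma iterC_ker_kill k p s w : k \in endpoints (p :: s) -> iterC p s w -> ker_kill k w.
Proof.
elim/last_ind: s w => [|s e IH] w.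
  by move=> Hk; apply: Rgen_ker_kill; move: Hk; rewrite /endpoints /touches /= !inE; lia.
rewrite endpoints_rcons mem_cat iterC_rcons => Hk.
apply: gen_min; first exact: ker_kill_normal.
move=> _ [h [g [Hh [Hg ->]]]]; rewrite /ker_kill !kill_cat !kill_winv.
case/orP: Hk => Hk.
- by rewrite (IH _ Hk Hh) /= mulVw.
- have -> : freq (kill k g) [::].
    by apply: Rgen_ker_kill Hg; move: Hk; rewrite /touches !inE; lia.
  by rewrite /= cats0 mulVw.
Qed.

Lemma RT_ker_kill T w k : RT T w -> k \in T -> ker_kill k w.
Proof.
move=> Hw Hk; apply: (gen_min (ker_kill_normal k) _ Hw).
by move=> u [p [s [_ [HT Hs]]]]; apply: iterC_ker_kill (HT _ Hk) Hs.
Qed.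

End RetractionKernels.

Section KilledWords.
Variable J : Type.
Local Notation word := (word J).
Variable n : nat.
Local Notation normal := (@normal J n).
Local Notation levelq := (@levelq J n).
Local Notation RT := (@RT J n).
Local Notation iterC := (@iterC J n).
Local Notation Rgen := (@Rgen J n).
Variable m : nat.

Lemma Rgen_kill e w : Rgen e.1 e.2 w -> Rgen e.1 e.2 (kill m w).
Proof.
apply: kill_gen; first exact: Rgen_normal.
move=> _ [g [a [Hg ->]]]; rewrite kill_cat kill_winv.
have [Ht|Ht] := boolP (touches m e).
- by rewrite kill_touching //; apply: (gen_eq (gen_nil _)); rewrite mulVw.
- by rewrite kill_untouching //; apply: gen_in; exists (kill m g), a; rewrite level_kill.
Qed.

Lemma iterC_kill p s w : iterC p s w -> iterC p s (kill m w).
Proof.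
elim/last_ind: s w => [|s e IH] w; first exact: Rgen_kill.
rewrite iterC_rcons; apply: kill_gen.
  by apply: comm_normal; [apply: iterC_normal | apply: Rgen_normal].
move=> _ [h [k [Hh [Hk ->]]]]; rewrite !kill_cat !kill_winv.
by apply: gen_in; exists (kill m h), (kill m k); split; [apply: IH | split; first apply: Rgen_kill].
Qed.

(* The normal closure N_m of the letters touching m. *)
Definition Ntouch_gen (w : word) := exists e g a,
  [/\ valid_pair n e, touches m e, level n g & w = winv g ++ (true, (e.1, e.2, a)) :: g].
Definition Ntouch := gen Ntouch_gen.

Lemma Ntouch_normal : normal Ntouch.
Proof.
apply: gen_normal => _ g [e [g' [a [He Ht Hg' ->]]]] Hg.
apply: gen_in; exists e, (g' ++ g), a; split; rewrite ?level_cat ?Hg' //.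
by rewrite /conjw winv_cat -!catA.
Qed.

Lemma Ntouch_gen_levelq w : Ntouch_gen w -> levelq w.
Proof.
move=> [e [g [a [He _ Hg ->]]]]; apply: levelq_level.
by rewrite level_cat level_winv Hg /= Hg andbT; case: e He.
Qed.

Lemma Ntouch_mul_killV (g : word) : level n g -> Ntouch (g ++ winv (kill m g)).
Proof.
elim: g => [_|[b [[i j] a]] g IH /andP [Hv Hg]]; first exact: gen_nil.
have Hx : Ntouch [:: (true, (i, j, a))] -> Ntouch [:: (b, (i, j, a))].
  by case: b {Hv} => // H; apply: (gen_inv H).
have [Ht|Ht] := boolP (touches m (i, j)).
- rewrite kill_touching //.
  apply: (gen_mul (u := [:: _])); last exact: IH.
  by apply: Hx; apply: gen_in; exists (i, j), [::], a.
- rewrite kill_untouching // winv_cons.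
  have := normalJ Ntouch_normal (IH Hg) (g := [:: (~~ b, (i, j, a))]).
  rewrite /conjw /winv /= negbK -/(winv (kill m g)) -catA; apply.
  by rewrite /level /= andbT.
Qed.

(* For a generator b of R_e, b (kill m b)^-1 lies in R_e if e touches m, and
   in [N_m, R_e] otherwise; [Rdefect e] contains both. *)
Definition Rdefect_gen e (w : word) :=
  (touches m e /\ Rgen e.1 e.2 w) \/
  exists2 e', valid_pair n e' /\ touches m e' & iterC e' [:: e] w.
Definition Rdefect e := gen (Rdefect_gen e).

Lemma Rdefect_normal e : normal (Rdefect e).
Proof.
apply: gen_normal => s g [[Ht Hs]|[e' He' Hs]] Hg; apply: gen_in.
- by left; split; last exact: (normalJ (Rgen_normal _ _) Hs Hg).
- by right; exists e'; last exact: (normalJ (iterC_normal _ _) Hs Hg).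
Qed.

Lemma Rdefect_gen_levelq e w : valid_pair n e -> Rdefect_gen e w -> levelq w.
Proof.
move=> He [[_ Hw]|[e' [He' _] Hw]]; first exact: Rgen_levelq He Hw.
by apply: (iterC_levelq (p := e') (s := [:: e])) Hw; rewrite /= He He'.
Qed.

Lemma Rgen_mul_killV e b : valid_pair n e -> Rgen e.1 e.2 b ->
  Rdefect e (b ++ winv (kill m b)).
Proof.
move=> He; apply: gen_mul_killV; first exact: Rdefect_normal.
  by move=> s Hs; apply: Rgen_levelq He (gen_in Hs).
move=> _ [g [a [Hg ->]]].
have Hs : Rgen e.1 e.2 (winv g ++ (true, (e.1, e.2, a)) :: g) by apply: gen_in; exists g, a.
rewrite kill_cat kill_winv.
have [Ht|Ht] := boolP (touches m e).
- rewrite kill_touching //.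
  apply: (group_freq (Rdefect_normal e) _ (gen_in (or_introl (conj Ht Hs)))).
  by rewrite mulVw cats0.
- rewrite kill_untouching //.
  set x := [:: (true, (e.1, e.2, a))]; set Kg := kill m g.
  have Hx : Rgen e.1 e.2 (winv x) by apply: gen_inv; apply: gen_in; exists [::], a.
  have HN : Rdefect e (commw (g ++ winv Kg) (winv x)).
    apply: (gen_comm_l (S := Ntouch_gen)) (Ntouch_mul_killV Hg) Hx.
    - exact: Rdefect_normal.
    - exact: Ntouch_gen_levelq.
    move=> _ z [e' [g' [a' [He' Ht' Hg' ->]]]] Hz; apply: gen_in; right; exists e' => //.
    apply: gen_in; exists (winv g' ++ (true, (e'.1, e'.2, a')) :: g'), z.
    by split=> //; apply: gen_in; exists g', a'.
  apply: (group_freq (Rdefect_normal e) _ (normalJ (Rdefect_normal e) HN (level_kill m Hg))).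
  rewrite /commw /conjw -/Kg.
  change ((true, (e.1, e.2, a)) :: g) with (x ++ g).
  change ((true, (e.1, e.2, a)) :: Kg) with (x ++ Kg).
  free_group [:: g; Kg; x].
Qed.

Lemma RT_comm_Rgen T e x z : valid_pair n e -> RT T x -> Rgen e.1 e.2 z ->
  RT (T ++ [:: e.1; e.2]) (commw x z).
Proof.
move=> He Hx Hz; apply: (gen_comm_l (S := RTgen n T)) Hx Hz.
- exact: RT_normal.
- exact: RTgen_levelq.
move=> w z' [p [s [Hv [HT Hs]]]] Hz'; apply: (RT_gen (p := p) (s := rcons s e)).
- by rewrite valid_rcons Hv.
- by move=> k; rewrite endpoints_rcons 2!mem_cat => /orP [/HT ->|->]; rewrite ?orbT.
- exact: iterC_comm.
Qed.

Lemma hall_witt (x y z : word) : freq (commw (commw y x) z)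
  (conjw (winv (conjw (commw (commw (winv x) (winv z)) y) z ++
                conjw (commw (commw z (winv y)) (winv x)) y)) x).
Proof. by rewrite /commw /conjw; free_group [:: x; y; z]. Qed.

Lemma RT_comm_comm T p s e e' (x y z : word) :
  all (valid_pair n) (p :: rcons (rcons s e) e') ->
  {subset T <= endpoints (p :: rcons (rcons s e) e')} ->
  iterC p s z -> Rgen e'.1 e'.2 y -> Rgen e.1 e.2 x -> RT T (commw (commw y x) z).
Proof.
rewrite !valid_rcons => /andP [/andP [Hv He] He'] HT Hz Hy Hx.
have HN : normal (RT T) := RT_normal _.
have Vx := groupV (Rgen_normal _ _) Hx; have Vy := groupV (Rgen_normal _ _) Hy.
apply: (group_freq HN (freq_sym (hall_witt x y z))).
apply: (normalJq HN) (Rgen_levelq He Hx); apply: (groupV HN); apply: (groupM HN).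
- apply: (normalJq HN) (iterC_levelq Hv Hz).
  apply: (RT_gen (p := p) (s := rcons (rcons s e) e')); rewrite ?valid_rcons ?Hv ?He ?He' //.
  apply: iterC_comm Hy.
  have Czx : iterC p (rcons s e) (commw (winv z) (winv x)).
    by apply: iterC_comm Vx; apply: (groupV (iterC_normal _ _)).
  apply: (group_freq (iterC_normal _ _) _ (groupV (iterC_normal _ _) Czx)).
  by rewrite /commw; free_group [:: x; z].
- apply: (normalJq HN) (Rgen_levelq He' Hy).
  apply: (RT_gen (p := p) (s := rcons (rcons s e') e)); rewrite ?valid_rcons ?Hv ?He ?He' //.
    move=> k /HT; rewrite !endpoints_rcons !mem_cat.
    by case/orP => [/orP [->|->]|->]; rewrite ?orbT.
  by apply: iterC_comm Vx; apply: iterC_comm Vy.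
Qed.

Lemma RT_comm_Rdefect p s e g z : all (valid_pair n) (p :: rcons s e) ->
  Rdefect_gen e g -> iterC p s z -> RT (m :: endpoints (p :: rcons s e)) (commw g z).
Proof.
move=> Hv; have /andP [Hps He] : all (valid_pair n) (p :: s) && valid_pair n e.
  by rewrite -valid_rcons.
have HN : normal (RT (m :: endpoints (p :: rcons s e))) := RT_normal _.
case=> [[Ht Hg]|[e' [He' Ht] Hg]] Hz.
- have Hzg : RT (m :: endpoints (p :: rcons s e)) (commw z g).
    apply: RT_gen Hv _ (iterC_comm Hz Hg) => k; rewrite inE endpoints_rcons mem_cat.
    by case/orP => [/eqP ->|->]; rewrite ?touches_mem ?orbT.
  apply: (group_freq HN _ (groupV HN Hzg)).
  by rewrite /commw; free_group [:: g; z].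
- apply: (comm_comm_l HN) Hg.
  + by move=> h; apply: Rgen_levelq He'.
  + by move=> k; apply: Rgen_levelq He.
  move=> y x Hy Hx; apply: (RT_comm_comm (e' := e')) Hz Hy Hx.
    by rewrite valid_rcons Hv He'.
  move=> k; rewrite in_cons => /orP [/eqP ->|Hk]; rewrite mem_endpoints_rcons ?Hk //.
  by rewrite touches_mem ?orbT.
Qed.

Lemma Rdefect_RT e w : valid_pair n e -> Rdefect e w -> RT (m :: endpoints [:: e]) w.
Proof.
move=> He; apply: gen_min; first exact: RT_normal.
move=> u [[Ht Hw]|[e' [He' Ht] Hw]].
- apply: (RT_gen (p := e) (s := [::])) Hw; first by rewrite /= He.
  by move=> k; rewrite inE => /orP [/eqP ->|//]; rewrite /endpoints /= touches_mem.
- apply: (RT_gen (p := e') (s := [:: e])) Hw; first by rewrite /= He He'.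
  move=> k; rewrite /endpoints /= !inE => /orP [/eqP ->|->]; last by rewrite !orbT.
  by move: (touches_mem Ht); rewrite !inE => /orP [] ->; rewrite ?orbT.
Qed.

Lemma commw_mul_killV (a b A B : word) : freq (commw a b ++ winv (commw A B))
  (conjw (commw (a ++ winv A) b) A ++
   conjw (conjw (commw A (b ++ winv B)) B) (winv (commw A B))).
Proof. by rewrite /commw /conjw; free_group [:: a; b; A; B]. Qed.

Lemma iterC_mul_killV p s c : all (valid_pair n) (p :: s) -> iterC p s c ->
  RT (m :: endpoints (p :: s)) (c ++ winv (kill m c)).
Proof.
elim/last_ind: s c => [|s e IH] c.
  by rewrite /= andbT => Hp Hc; apply: Rdefect_RT Hp (Rgen_mul_killV Hp Hc).
rewrite valid_rcons iterC_rcons => /andP [Hps He] Hc.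
have HN : normal (RT (m :: endpoints (p :: rcons s e))) := RT_normal _.
apply: (gen_mul_killV HN _ _ Hc).
  move=> _ [h [k [Hh [Hk ->]]]].
  by apply: levelq_comm; [apply: iterC_levelq Hps Hh | apply: Rgen_levelq He Hk].
move=> _ [a [b [Ha [Hb ->]]]]; rewrite -/(commw a b) kill_commw.
have La := levelq_kill m (iterC_levelq Hps Ha); have Lb := levelq_kill m (Rgen_levelq He Hb).
apply: (group_freq HN _ (groupM HN _ _)); first by symmetry; apply: commw_mul_killV.
- apply: (normalJq HN) La; rewrite endpoints_rcons.
  exact: RT_comm_Rgen He (IH _ Hps Ha) Hb.
- apply: (normalJq HN); last by apply: levelqV; apply: levelq_comm.
  apply: (normalJq HN) Lb.
  have HD : RT (m :: endpoints (p :: rcons s e))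
              (commw (b ++ winv (kill m b)) (kill m a)).
    apply: (gen_comm_l (S := Rdefect_gen e)) (Rgen_mul_killV He Hb) (iterC_kill Ha).
    + exact: HN.
    + by move=> w; apply: Rdefect_gen_levelq He.
    + by move=> g z; apply: RT_comm_Rdefect; rewrite valid_rcons Hps.
  apply: (group_freq HN _ (groupV HN HD)).
  by rewrite /commw; set B := b ++ _; free_group [:: kill m a; B].
Qed.

End KilledWords.

Section KernelIntersections.
Variable J : Type.
Local Notation word := (word J).
Variable n : nat.

Lemma RT_nil (w : word) : level n w -> RT n [::] w.
Proof.
elim: w => [_|[b [[i j] a]] w IH /andP [Hv Hw]]; first exact: gen_nil.
apply: (gen_mul (u := [:: _])); last exact: IH.
have Hx : RT n [::] [:: (true, (i, j, a))].
  by apply: (RT_gen (p := (i, j)) (s := [::])); rewrite /= ?andbT //; apply: gen_in; exists [::], a.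
by case: b {Hv}; last exact: gen_inv Hx.
Qed.

Lemma ker_kill_RT T (w : word) : level n w -> (forall k, k \in T -> ker_kill k w) -> RT n T w.
Proof.
elim: T w => [|m T IH] w Hw Hk; first exact: RT_nil.
have HT : RT n T w by apply: IH => // k HkT; apply: Hk; rewrite in_cons HkT orbT.
have Hd : RT n (m :: T) (w ++ winv (kill m w)).
  apply: (gen_mul_killV (RT_normal _) (@RTgen_levelq J n T)) HT.
  move=> s [p [q [Hv [HT' Hs]]]]; apply: RT_sub (iterC_mul_killV m Hv Hs).
  move=> k; rewrite in_cons => /orP [/eqP ->|/HT' HkT]; first exact: mem_head.
  by rewrite in_cons HkT orbT.
apply: (group_freq (RT_normal _) _ Hd).
by rewrite (Hk m (mem_head _ _)) cats0.
Qed.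

Lemma RT_ker_killP T (w : word) : level n w ->
  RT n T w <-> (forall k, k \in T -> ker_kill k w).
Proof. by move=> Hw; split=> [HT k Hk|]; [apply: RT_ker_kill HT Hk | apply: ker_kill_RT]. Qed.

End KernelIntersections.

Theorem lemma3p5 (J : Type) (n : nat) : 1 <= n ->
  (forall w : word J, level n w -> (MooreN n w <-> RT n (iota 2 n) w)) /\
  (forall w : word J, level n w -> (MooreZ n w <-> RT n (iota 1 n.+1) w)) /\
  (forall w : word J, level n w ->
     (MooreB n w <-> MooreZ n w) /\ (MooreZ n w <-> RT n (iota 1 n.+1) w)).
Proof.
move=> _.
have cycles (w : word J) : level n w -> MooreZ n w <-> RT n (iota 1 n.+1) w.
  by move=> Hw; rewrite MooreZ_kill // RT_ker_killP.
split; first by move=> w Hw; rewrite MooreN_kill // RT_ker_killP.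
split; first exact: cycles.
by move=> w Hw; split; [exact: MooreB_Z | exact: cycles].
Qed.
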